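(* Let $r\ge 3$. There exists an uncountable set of $r$-tuples $(\alpha_1,\dots,\alpha_r)\in\mathbb{R}^r$, each such that $1,\alpha_1,\dots,\alpha_r$ are linearly independent over $\mathbb{Q}$, with the following property: there is a three-dimensional sublattice $\Lambda(\alpha_1,\dots,\alpha_r)$ of $\mathbb{Z}^{r+1}$ such that the best approximations $m_\nu$ (in the sense of linear form) for $(\alpha_1,\dots,\alpha_r)$ lie in $\Lambda(\alpha_1,\dots,\alpha_r)$ for all sufficiently large $\nu$.
   Context: For real $\alpha_1,\dots,\alpha_r$ and $m=(m_0,\dots,m_r)\in\mathbb{Z}^{r+1}\setminus\{0\}$ put $\zeta(m)=|m_0+m_1\alpha_1+\dots+m_r\alpha_r|$ and $M=\max_{0\le j\le r}|m_j|$. A point $m\in\mathbb{Z}^{r+1}\setminus\{0\}$ is a best approximation (in the sense of linear form) if $\zeta(m)=\min\{\zeta(n): n\in\mathbb{Z}^{r+1}\setminus\{0\},\ \max_j|n_j|\le M\}$. The best approximations are ordered as $m_1,m_2,\dots$ so that $\zeta(m_1)>\zeta(m_2)>\dots$ and $M_1<M_2<\dots$, where $M_\nu=\max_j|m_{j,\nu}|$. *)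

From HB Require Import structures.
From mathcomp Require Import all_boot all_order all_algebra.
From mathcomp Require Import boolp classical_sets cardinality reals.
Set Implicit Arguments. Unset Strict Implicit. Unset Printing Implicit Defensive.
Import Order.TTheory GRing.Theory Num.Theory.
Local Open Scope ring_scope.
Local Open Scope classical_set_scope.

(* A point m = (m_0, ..., m_r) of Z^{r+1} is a function 'I_r.+1 -> int;
   coordinate 0 is m_0, coordinate (lift ord0 j) is m_{j+1}.
   The tuple (alpha_1,...,alpha_r) is alpha : 'I_r -> R. *)

Definition zeta (R : realType) (r : nat) (alpha : 'I_r -> R) (m : 'I_r.+1 -> int) : R :=
  `| (m ord0)%:~R + \sum_(j < r) (m (lift ord0 j))%:~R * alpha j |.

Definition supnorm (r : nat) (m : 'I_r.+1 -> int) : nat :=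
  (\max_(j < r.+1) `|m j|)%N.

Definition nonzero_vec (r : nat) (m : 'I_r.+1 -> int) : Prop := exists j, m j <> 0.

Definition best_approx (R : realType) (r : nat) (alpha : 'I_r -> R) (m : 'I_r.+1 -> int) : Prop :=
  nonzero_vec m /\
  forall n : 'I_r.+1 -> int, nonzero_vec n -> (supnorm n <= supnorm m)%N ->
    zeta alpha m <= zeta alpha n.

Definition Q_lin_indep1 (R : realType) (r : nat) (alpha : 'I_r -> R) : Prop :=
  forall q : 'I_r.+1 -> rat,
    ratr (q ord0) + \sum_(j < r) ratr (q (lift ord0 j)) * alpha j = 0 ->
    forall i, q i = 0.

Definition Z_lin_indep (r k : nat) (b : 'I_k -> 'I_r.+1 -> int) : Prop :=
  forall a : 'I_k -> int, (forall i, \sum_(l < k) a l * b l i = 0) -> forall l, a l = 0.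

Definition in_lattice (r k : nat) (b : 'I_k -> 'I_r.+1 -> int) (m : 'I_r.+1 -> int) : Prop :=
  exists a : 'I_k -> int, forall i, m i = \sum_(l < k) a l * b l i.

(* Write r = p + 3.  For a binary sequence b put e_0 = 0 and
   e_(k+1) = 2 e_k + p + 6 + b_k, and give the digit 2^-e_(k+1) to the
   coordinate column(k) of alpha: the positions come in blocks of length p + 2,
   the first digit of a block going alternately to alpha_1 and alpha_2 and the
   others to alpha_3, ..., alpha_r.  Truncating alpha after k digits turns the
   linear form L(m) into numer(m, k) / 2^e_k with numer(m, k) an integer, and
   the exponents grow so fast that |L(m)| >= 2^-(e_s + 1) as soon as
   numer(m, s) <> 0 and |m| < 2^e_s.  Now let m be a best approximation with
   m_j <> 0 for some j >= 3, let 2^e_K <= |m| < 2^e_(K+1) and let s > K be the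
   first stage with numer(m, s) <> 0.  Then no digit of alpha_j lies strictly
   inside [K, s), so by the block structure the digits in [K, s) miss alpha_1
   or alpha_2, say alpha_c; but then 2^e_K (x_c - A_c(K) x_0), with A_c(K) the
   truncation of alpha_c, is an integer vector of height at most |m| with a
   smaller value of |L|, a contradiction.  Hence best approximations lie in the
   lattice spanned by the first three unit vectors.  The same lower bound gives
   the linear independence of 1, alpha_1, ..., alpha_r over Q, and distinct
   sequences b give distinct tuples, hence uncountably many. *)

From mathcomp Require Import all_boot all_order all_algebra.
From mathcomp Require Import boolp classical_sets cardinality reals.
From mathcomp Require Import zify lra ring.
Import Order.TTheory GRing.Theory Num.Theory.

Set Implicit Arguments.
Unset Strict Implicit.
Unset Printing Implicit Defensive.

Section Exponents.
Variables (p : nat) (b : nat -> bool).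

Fixpoint expo (k : nat) : nat :=
  if k is k'.+1 then 2 * expo k' + p + 6 + b k' else 0.

Lemma expoS k : expo k.+1 = 2 * expo k + p + 6 + b k.
Proof. by []. Qed.

Lemma ltn_expoS k : expo k < expo k.+1.
Proof. rewrite expoS; lia. Qed.

Lemma leq_expo k l : k <= l -> expo k <= expo l.
Proof.
move=> /subnKC <-; elim: (l - k) => [|d IH]; first by rewrite addn0.
by rewrite addnS (leq_trans IH) // ltnW // ltn_expoS.
Qed.

Lemma leq_id_expo k : k <= expo k.
Proof. elim: k => // k IH; rewrite expoS; lia. Qed.

Lemma ltn_exp_expo t s : t <= s -> t < 2 ^ expo s.
Proof.
move=> ts; have := ltn_expl s (ltnSn 1).
have : 2 ^ s <= 2 ^ expo s by rewrite leq_exp2l // leq_id_expo.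
lia.
Qed.

Lemma expo_gap s mu : mu < 2 ^ expo s -> 4 * p.+3 * mu * 2 ^ expo s < 2 ^ expo s.+1.
Proof.
move=> hmu; set X := 2 ^ expo s.
have -> : 2 ^ expo s.+1 = 2 ^ (p + 6) * X * X * 2 ^ b s by rewrite expoS !expnD; ring.
have hp : 4 * p.+3 < 2 ^ (p + 6) by rewrite expnD; have := ltn_expl p (ltnSn 1); lia.
have X0 : 0 < X by rewrite expn_gt0.
have h1 : 4 * p.+3 * mu < 2 ^ (p + 6) * X by rewrite ltn_mul.
by apply: (@leq_trans (2 ^ (p + 6) * X * X)); rewrite ?ltn_pmul2r ?leq_pmulr ?expn_gt0.
Qed.

Lemma expo_bracket mu : 0 < mu -> exists K, 2 ^ expo K <= mu < 2 ^ expo K.+1.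
Proof.
move=> mu0; have ex_k : exists k, mu < 2 ^ expo k by exists mu; apply: ltn_exp_expo.
have [k hk kmin] := ex_minnP ex_k.
case: k hk kmin => [|K] hK kmin; first by move: hK; rewrite expn0; lia.
by exists K; rewrite hK andbT leqNgt; apply/negP => /kmin; rewrite ltnn.
Qed.

End Exponents.

Section Columns.
Variable p : nat.

Definition column (k : nat) : nat :=
  if k %% p.+2 == 0 then nat_of_bool (odd (k %/ p.+2)) else (k %% p.+2).+1.

Lemma column_lt k : column k < p.+3.
Proof. by rewrite /column; case: ifP => _; [case: odd | rewrite ltnS ltn_pmod]. Qed.

Lemma columnE q t : t < p.+2 ->
  column (q * p.+2 + t) = if t == 0 then nat_of_bool (odd q) else t.+1.
Proof. by move=> ht; rewrite /column modnMDl divnMDl // modn_small // divn_small // addn0. Qed.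

Lemma column_hits j a : j < p.+3 -> exists2 i, a <= i & column i = j.
Proof.
case: j => [|[|j]] hj.
- by exists (a.*2 * p.+2 + 0); rewrite ?columnE ?odd_double //; nia.
- by exists (a.*2.+1 * p.+2 + 0); rewrite ?columnE //= ?odd_double //; nia.
- by exists (a * p.+2 + j.+1); rewrite ?columnE //; nia.
Qed.

Lemma column_between i1 i2 j : column i1 <= 1 -> column i2 <= 1 ->
  column i1 != column i2 -> i1 < i2 -> 2 <= j < p.+3 ->
  exists2 i, i1 < i < i2 & column i = j.
Proof.
have col01 k : column k <= 1 -> k = k %/ p.+2 * p.+2 /\ column k = odd (k %/ p.+2).
  rewrite /column; case: eqP => [e0 _ | neq]; first by rewrite {1}(divn_eq k p.+2) e0 addn0.
  by rewrite ltnS leqn0 => /eqP.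
move=> /col01[e1 ->] /col01[e2 ->] hq; rewrite e1 e2.
set q1 := i1 %/ p.+2; set q2 := i2 %/ p.+2 => lt12 /andP[hj hj'].
have {hq}lt_q : q1 < q2.
  by rewrite -(ltn_pmul2r (ltn0Sn p.+1)); case: ltngtP hq lt12 => // ->; rewrite eqxx.
exists (q1 * p.+2 + j.-1); last by rewrite columnE; case: j hj hj' => [|[|j]] //; lia.
have : q1.+1 * p.+2 <= q2 * p.+2 by rewrite leq_mul2r lt_q orbT.
rewrite mulSn; lia.
Qed.

Definition column_ord (k : nat) : 'I_p.+3 := inord (column k).

Lemma column_ordE k : column_ord k = column k :> nat.
Proof. by rewrite inordK // column_lt. Qed.

Lemma column_ord_eq k (c : 'I_p.+3) : (column_ord k == c) = (column k == c).
Proof. by rewrite -val_eqE /= column_ordE. Qed.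

End Columns.

Local Open Scope ring_scope.

Definition linform (R : numDomainType) (r : nat) (a : 'I_r -> R) (m : 'I_r.+1 -> int) : R :=
  (m ord0)%:~R + \sum_(j < r) (m (lift ord0 j))%:~R * a j.

Lemma zetaE (R : realType) (r : nat) (a : 'I_r -> R) m : zeta a m = `|linform a m|.
Proof. by []. Qed.

Lemma mul_div_lt_half_inv (R : realFieldType) (x a a' : R) : 0 < a -> 0 < a' ->
  4 * x * a < a' -> x * (2 / a') < (2 * a)^-1.
Proof.
move=> a0 a'0 h; have c0 : 0 < (2 * a * a')^-1 by rewrite invr_gt0 !mulr_gt0.
rewrite (_ : x * (2 / a') = 4 * x * a * (2 * a * a')^-1); last by field; rewrite !gt_eqF.
rewrite (_ : (2 * a)^-1 = a' * (2 * a * a')^-1); last by field; rewrite !gt_eqF.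
by rewrite ltr_pM2r.
Qed.

Lemma supnorm_ge (r : nat) (m : 'I_r.+1 -> int) i : (`|m i|%N <= supnorm m)%N.
Proof. exact: (@leq_bigmax _ (fun j => `|m j|%N) i). Qed.

Lemma normr_le_supnorm (R : numDomainType) (r : nat) (m : 'I_r.+1 -> int) i :
  `|(m i)%:~R : R| <= (supnorm m)%:R.
Proof. by rewrite -intr_norm -natr_absz ler_nat supnorm_ge. Qed.

Lemma Q_lin_indep1_of_int (R : realType) (r : nat) (a : 'I_r -> R) :
  (forall m, linform a m = 0 -> forall i, m i = 0) -> Q_lin_indep1 a.
Proof.
move=> indep q hq.
pose D := \prod_(k < r.+1) denq (q k).
pose m k := numq (q k) * \prod_(l < r.+1 | l != k) denq (q l).
have mE k : (m k)%:~R = ratr (q k) * D%:~R :> R.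
  have mQ : (m k)%:~R = q k * D%:~R :> rat.
    by rewrite /m /D [in RHS](bigD1 k) //= !intrM numqE mulrA.
  by rewrite -(ratr_int R (m k)) mQ rmorphM /= ratr_int.
have L0 : linform a m = 0.
  rewrite /linform mE; under eq_bigr do rewrite mE.
  rewrite (_ : \sum_(j < r) _ = D%:~R * \sum_(j < r) ratr (q (lift ord0 j)) * a j).
    by rewrite mulrC -mulrDr hq mulr0.
  by rewrite mulr_sumr; apply: eq_bigr => j _; ring.
move=> i; have /eqP := indep m L0 i; rewrite mulf_eq0 numq_eq0 => /orP[/eqP //|].
by rewrite gt_eqF // prodr_gt0 // => l _; rewrite denq_gt0.
Qed.

Definition std_basis (k n : nat) : 'I_k -> 'I_n -> int := fun l i => ((l : nat) == i)%:Z.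

Lemma sum_std_basis k n (a : 'I_k -> int) (l : 'I_k) (i : 'I_n) : (l : nat) = i ->
  \sum_(l' < k) a l' * std_basis l' i = a l.
Proof.
move=> li; rewrite (bigD1 l) //= /std_basis li eqxx mulr1 big1 ?addr0 // => l' l'l.
by rewrite -li (inj_eq val_inj) (negbTE l'l) mulr0.
Qed.

Lemma sum_std_basis_out k n (a : 'I_k -> int) (i : 'I_n) : (k <= i)%N ->
  \sum_(l < k) a l * std_basis l i = 0.
Proof.
move=> ki; rewrite big1 // => l _; rewrite /std_basis.
by case: eqP => [li|_]; [move: (ltn_ord l); rewrite li ltnNge ki | rewrite mulr0].
Qed.

Lemma std_basis_indep k r : (k <= r.+1)%N -> Z_lin_indep (@std_basis k r.+1).
Proof. by move=> kr a H l; rewrite -(H (widen_ord kr l)) (sum_std_basis a (l := l)). Qed.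

Lemma in_lattice_std_basis k r (m : 'I_r.+1 -> int) : (k <= r.+1)%N ->
  (forall i : 'I_r.+1, (k <= i)%N -> m i = 0) -> in_lattice (@std_basis k r.+1) m.
Proof.
move=> kr H; exists (fun l => m (widen_ord kr l)) => i.
have [ik | /[dup] ki /H ->] := ltnP i k; last by rewrite sum_std_basis_out.
by rewrite (sum_std_basis _ (l := Ordinal ik)) //; congr m; apply: val_inj.
Qed.

Section Construction.
Variables (R : realType) (p : nat) (b : nat -> bool).

Local Notation e := (expo p b).

Definition scale (k : nat) : R := 2 ^+ e k.

Fixpoint psum (c : 'I_p.+3) (k : nat) : R :=
  if k is k'.+1 then psum c k' + (column_ord p k' == c)%:R / scale k'.+1 else 0.

Definition lac (c : 'I_p.+3) : R := sup (range (psum c)).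

Lemma scale_gt0 k : 0 < scale k.
Proof. by rewrite exprn_gt0. Qed.

Lemma scaleS k : scale k.+1 = scale k * 2 ^+ (e k.+1 - e k).
Proof. by rewrite /scale -exprD subnKC // ltnW // ltn_expoS. Qed.

Lemma scale4 k : 4 * scale k <= scale k.+1.
Proof.
rewrite scaleS mulrC ler_pM2l ?scale_gt0 // (_ : 4 = 2 ^+ 2); last by rewrite expr2; lra.
by rewrite ler_eXn2l ?ltr1n // expoS; lia.
Qed.

Lemma inv_scale4 k : 4 / scale k.+1 <= (scale k)^-1.
Proof.
have := scale4 k; have := scale_gt0 k; have := scale_gt0 k.+1.
by move=> h1 h0 h; rewrite ler_pdivrMr // mulrC ler_pdivlMr.
Qed.

Lemma psum_mono c k l : (k <= l)%N -> psum c k <= psum c l.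
Proof.
move=> /subnKC <-; elim: (l - k)%N => [|d IH]; first by rewrite addn0.
by rewrite addnS (le_trans IH) //= lerDl divr_ge0 ?ler0n // ltW ?scale_gt0.
Qed.

Lemma psum_ge0 c k : 0 <= psum c k.
Proof. exact: psum_mono (leq0n k). Qed.

Lemma psum_ub c k l : psum c l <= psum c k + 2 / scale k.+1.
Proof.
have tail_ge0 n : 0 <= 2 / scale n by rewrite divr_ge0 // ltW // scale_gt0.
have [lk | /ltnW/subnKC <-] := leqP l k.
  by rewrite (le_trans (psum_mono c lk)) // lerDl.
suff tail : forall d, psum c (k + d) + 2 / scale (k + d).+1 <= psum c k + 2 / scale k.+1.
  by apply: le_trans _ (tail (l - k)%N); rewrite lerDl.
elim=> [|d IH]; first by rewrite addn0.
apply: le_trans IH; rewrite addnS /=.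
have := inv_scale4 (k + d).+1; have := scale_gt0 (k + d).+2.
set s := scale (k + d).+1; set s' := scale (k + d).+2 => s'0 h4.
have h1 : (column_ord p (k + d) == c)%:R / s <= s^-1.
  by rewrite -[leRHS]mul1r ler_pM2r ?invr_gt0 ?scale_gt0 //; case: eqP.
have h2 : 2 / s' <= s^-1.
  by apply: le_trans h4; rewrite ler_pM2r ?invr_gt0 // ler_nat.
by rewrite -addrA lerD2l [2 / s]mulrDl mul1r; apply: lerD.
Qed.

Lemma psum_le1 c k : psum c k <= 1.
Proof.
apply: le_trans (psum_ub c 0 k) _; rewrite /= add0r ler_pdivrMr ?scale_gt0 // mul1r.
by apply: le_trans (scale4 0); rewrite /scale expr0 mulr1; lra.
Qed.

Lemma psum_le_lac c k : psum c k <= lac c.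
Proof.
apply: ub_le_sup; last by exists k.
by exists (psum c 0 + 2 / scale 1) => _ [l _ <-]; apply: psum_ub.
Qed.

Lemma lac_le_psum c k : lac c <= psum c k + 2 / scale k.+1.
Proof.
apply: ge_sup; first by exists (psum c 0), 0%N.
by move=> _ [l _ <-]; apply: psum_ub.
Qed.

Lemma psum_const c k l : (k <= l)%N ->
  (forall i, (k <= i < l)%N -> column_ord p i != c) -> psum c l = psum c k.
Proof.
move=> /subnKC <-; elim: (l - k)%N => [|d IH] H; first by rewrite addn0.
rewrite addnS /= IH => [|i /andP[ki il]]; last by rewrite H // ki addnS ltnW.
by rewrite (negbTE (H _ _)) ?mul0r ?addr0 // leq_addr addnS leqnn.
Qed.

Fixpoint numer (m : 'I_p.+4 -> int) (k : nat) : int :=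
  if k is k'.+1 then numer m k' * (2 ^ (e k'.+1 - e k'))%N%:Z + m (lift ord0 (column_ord p k'))
  else m ord0.

Lemma numer_psum m k : (numer m k)%:~R / scale k = linform (psum^~ k) m.
Proof.
elim: k => [|k IH].
  by rewrite /linform /scale /= expr0 divr1 big1 ?addr0 // => c _; rewrite mulr0.
rewrite /linform /= in IH *.
under eq_bigr do rewrite mulrDr.
rewrite big_split /= addrA -IH (bigD1 (column_ord p k)) //= eqxx big1 ?addr0; last first.
  by move=> c /negbTE; rewrite eq_sym => ->; rewrite mul0r mulr0.
rewrite intrD intrM -expoS scaleS -[((2 ^ _)%N%:Z)%:~R]/((2 ^ (e k.+1 - e k))%N%:R) natrX.
have := scale_gt0 k; have : (2 : R) ^+ (e k.+1 - e k) != 0 by rewrite gt_eqF // exprn_gt0.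
move: (scale k) (2 ^+ _ : R) => s t t0 s0; rewrite [true%:R]/=; field.
by rewrite t0 gt_eqF.
Qed.

Lemma linform_lac_split m k : linform lac m = (numer m k)%:~R / scale k +
  \sum_(j < p.+3) (m (lift ord0 j))%:~R * (lac j - psum j k).
Proof.
rewrite numer_psum /linform -addrA; congr (_ + _); rewrite -big_split /=.
by apply: eq_bigr => j _; rewrite -mulrDr addrC subrK.
Qed.

Lemma lac_tail_bound m k :
  `|\sum_(j < p.+3) (m (lift ord0 j))%:~R * (lac j - psum j k)|
    <= (p.+3)%:R * (supnorm m)%:R * (2 / scale k.+1).
Proof.
apply: le_trans (ler_norm_sum _ _ _) _.
rewrite -mulrA (_ : (p.+3)%:R * _ = \sum_(j < p.+3) (supnorm m)%:R * (2 / scale k.+1)).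
  2: by rewrite sumr_const card_ord mulr_natl.
apply: ler_sum => j _; rewrite normrM; apply: ler_pM => //; first exact: normr_le_supnorm.
rewrite ger0_norm ?subr_ge0 ?psum_le_lac //.
by rewrite lerBlDl lac_le_psum.
Qed.

Lemma zeta_lac_ge m s : numer m s != 0 -> (supnorm m < 2 ^ e s)%N ->
  (2 * scale s)^-1 <= zeta lac m.
Proof.
move=> ns0 /expo_gap gap; rewrite zetaE (linform_lac_split m s).
have s0 := scale_gt0 s.
have := lac_tail_bound m s; set E := \sum_(j < _) _ => tail.
have gapR : 4 * ((p.+3)%:R * (supnorm m)%:R) * scale s < scale s.+1.
  by move: gap; rewrite -(ltr_nat R) !natrM !natrX !mulrA.
have small := le_lt_trans tail (mul_div_lt_half_inv s0 (scale_gt0 s.+1) gapR).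
have big : (scale s)^-1 <= `|(numer m s)%:~R / scale s|.
  rewrite normrM normfV (gtr0_norm s0) -[leLHS]mul1r ler_pM2r ?invr_gt0 //.
  by rewrite -intr_norm ler1z -gtz0_ge1 normr_gt0.
have half : (scale s)^-1 = 2 * (2 * scale s)^-1 by field; rewrite gt_eqF.
apply: le_trans (lerB_normD _ E); move: small big; rewrite {1}half; lra.
Qed.

Definition unitv (c : 'I_p.+3) : 'I_p.+4 -> int := fun i => (i == lift ord0 c)%:Z.

Definition approx_vec (c : 'I_p.+3) (K : nat) : 'I_p.+4 -> int :=
  fun i => if i == ord0 then - numer (unitv c) K else (2 ^ e K)%N%:Z * unitv c i.

Lemma numer_unitv c K : (numer (unitv c) K)%:~R = scale K * psum c K.
Proof.
have := numer_psum (unitv c) K; rewrite /linform /unitv add0r.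
rewrite (bigD1 c) //= eqxx big1 ?addr0 => [|j /negbTE cj]; last first.
  by rewrite (inj_eq lift_inj) cj mul0r.
by rewrite mul1r => <-; rewrite mulrC divfK // gt_eqF // scale_gt0.
Qed.

Lemma linform_approx_vec c K :
  linform lac (approx_vec c K) = scale K * (lac c - psum c K).
Proof.
rewrite /linform /approx_vec eqxx intrN numer_unitv (bigD1 c) //= big1 ?addr0.
  by rewrite /unitv eqxx mulr1 -[((2 ^ _)%N%:Z)%:~R]/((2 ^ e K)%N%:R) natrX /scale; ring.
by move=> j /negbTE cj; rewrite /unitv (inj_eq lift_inj) cj mulr0 mul0r.
Qed.

Lemma supnorm_approx_vec c K : (supnorm (approx_vec c K) <= 2 ^ e K)%N.
Proof.
apply/bigmax_leqP => i _; rewrite /approx_vec.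
case: eqP => _; last by rewrite /unitv; case: (i == _); rewrite ?mulr1 ?mulr0.
have numR := numer_unitv c K.
have num_ge0 : 0 <= numer (unitv c) K.
  by rewrite -(ler0z R) numR mulr_ge0 ?psum_ge0 // ltW // scale_gt0.
have num_le : numer (unitv c) K <= (2 ^ e K)%N.
  rewrite -(ler_int R) numR -[((2 ^ _)%N%:Z)%:~R]/((2 ^ e K)%N%:R) natrX.
  by rewrite -[leRHS]mulr1 ler_pM2l ?scale_gt0 ?psum_le1.
by rewrite abszN; lia.
Qed.

Lemma approx_vec_nonzero c K : nonzero_vec (approx_vec c K).
Proof.
exists (lift ord0 c); rewrite /approx_vec /= /unitv eqxx mulr1.
by apply/eqP; rewrite eqz_nat expn_eq0.
Qed.

Lemma zeta_approx_vec_lt c K s mu : (2 ^ e K <= mu)%N -> (mu < 2 ^ e s)%N ->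
  (K <= s)%N -> (forall i, (K <= i < s)%N -> column_ord p i != c) ->
  zeta lac (approx_vec c K) < (2 * scale s)^-1.
Proof.
move=> Kmu /expo_gap gap Ks c_free.
rewrite zetaE linform_approx_vec -(psum_const Ks c_free).
have := psum_le_lac c s; have := lac_le_psum c s; have K0 := scale_gt0 K.
move=> ub lb; rewrite ger0_norm; last by rewrite mulr_ge0 ?subr_ge0 // ltW.
have gapR : 4 * mu%:R * scale s < scale s.+1.
  rewrite -(ltr_nat R) !natrM !natrX in gap; apply: le_lt_trans gap.
  by rewrite -!mulrA ler_wpM2l // /scale ler_peMl ?mulr_ge0 ?exprn_ge0 // ler1n.
apply: le_lt_trans (mul_div_lt_half_inv (scale_gt0 s) (scale_gt0 s.+1) gapR).
apply: ler_pM; [exact: ltW | by rewrite subr_ge0 | | by rewrite lerBlDl].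
by move: Kmu; rewrite -(ler_nat R) natrX.
Qed.

Lemma numer_succ_eq0 m k : numer m k = 0 -> numer m k.+1 = 0 ->
  m (lift ord0 (column_ord p k)) = 0.
Proof. by move=> /= ->; rewrite mul0r add0r. Qed.

Lemma exists_numer_neq0 m t : (exists c : 'I_p.+3, m (lift ord0 c) != 0) ->
  exists2 s, (t <= s)%N & numer m s != 0.
Proof.
case=> c mc; have [i ti ci] := column_hits t (ltn_ord c).
have col_i : column_ord p i = c by apply/eqP; rewrite column_ord_eq ci.
have [Qi | Qi] := eqVneq (numer m i) 0; last by exists i.
exists i.+1; first exact: leqW.
by apply/eqP => Qi1; move: mc; rewrite -col_i (numer_succ_eq0 Qi Qi1) eqxx.
Qed.

(* A digit of alpha_j inside the window would make numer non-zero at two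
   consecutive stages, so the window cannot meet both alpha_1 and alpha_2. *)
Lemma exists_free_column m (j : 'I_p.+3) K s : (2 <= j)%N -> m (lift ord0 j) != 0 ->
  (forall i, (K < i < s)%N -> numer m i = 0) ->
  exists c, forall i, (K <= i < s)%N -> column_ord p i != c.
Proof.
move=> j2 mj Q0; apply: contrapT => none.
have hit c : (c < p.+3)%N -> exists2 i, (K <= i < s)%N & column p i = c.
  move=> cp; apply: contrapT => nc; apply: none; exists (inord c) => i iKs.
  by rewrite column_ord_eq inordK //; apply/eqP => ic; apply: nc; exists i.
have no_01_pair i i' : (K <= i)%N -> (i' < s)%N ->
    (column p i <= 1)%N -> (column p i' <= 1)%N -> column p i != column p i' ->
    (i < i')%N -> False.
  move=> Ki i's ci ci' cii' ii'.
  have j_range : (2 <= j < p.+3)%N by rewrite j2 ltn_ord.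
  have [k /andP[ik ki'] ck] := column_between ci ci' cii' ii' j_range.
  have col_k : column_ord p k = j by apply/eqP; rewrite column_ord_eq ck.
  by move: mj; rewrite -col_k (numer_succ_eq0 (Q0 k _) (Q0 k.+1 _)) ?eqxx //; lia.
have [i1 /andP[Ki1 i1s] c1] := hit 0%N isT; have [i2 /andP[Ki2 i2s] c2] := hit 1%N isT.
have [lt12 | lt21 | eq12] := ltngtP i1 i2.
- by apply: (no_01_pair i1 i2); rewrite ?c1 ?c2.
- by apply: (no_01_pair i2 i1); rewrite ?c1 ?c2.
- by move: c1; rewrite eq12 c2.
Qed.

Lemma best_approx_lac_eq0 m (j : 'I_p.+3) : (2 <= j)%N -> best_approx lac m ->
  m (lift ord0 j) = 0.
Proof.
move=> j2 [_ best]; apply/eqP; apply: contraT => mj.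
have mu0 : (0 < supnorm m)%N.
  by apply: leq_trans (supnorm_ge m (lift ord0 j)); rewrite absz_gt0.
have [K /andP[Kmu muK]] := expo_bracket p b mu0.
have ex_s : exists s, (K < s)%N && (numer m s != 0).
  by have [s Ks Qs] := exists_numer_neq0 K.+1 (ex_intro _ j mj); exists s; apply/andP.
have [s /andP[Ks Qs] smin] := ex_minnP ex_s.
have mus : (supnorm m < 2 ^ e s)%N.
  by apply: leq_trans muK _; rewrite leq_exp2l // leq_expo.
have Q0 i : (K < i < s)%N -> numer m i = 0.
  move=> /andP[Ki i_s]; apply/eqP; apply: contraTT i_s => Qi.
  by rewrite -leqNgt smin // Ki.
have [c c_free] := exists_free_column j2 mj Q0.
have hi := zeta_approx_vec_lt Kmu mus (ltnW Ks) c_free.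
have le := best _ (approx_vec_nonzero c K) (leq_trans (supnorm_approx_vec c K) Kmu).
by have := lt_le_trans (le_lt_trans le hi) (zeta_lac_ge Qs mus); rewrite ltxx.
Qed.

Lemma linform_lac_eq0 m : linform lac m = 0 -> forall i, m i = 0.
Proof.
move=> L0.
have cols c : m (lift ord0 c) = 0.
  apply/eqP; apply: contraT => mc.
  have [s ts Qs] := exists_numer_neq0 (supnorm m) (ex_intro _ c mc).
  have := zeta_lac_ge Qs (ltn_exp_expo p b ts); rewrite zetaE L0 normr0.
  by rewrite leNgt invr_gt0 mulr_gt0 ?scale_gt0.
have m0 : m ord0 = 0.
  move: L0; rewrite /linform big1 ?addr0 => [/eqP|j _]; last by rewrite cols mul0r.
  by rewrite intr_eq0 => /eqP.
by move=> i; case: (unliftP ord0 i) => [c ->|->].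
Qed.

Lemma best_approx_lac_in_lattice m : best_approx lac m -> in_lattice (@std_basis 3 p.+4) m.
Proof.
move=> best; apply: in_lattice_std_basis => // i.
by case: (unliftP ord0 i) => [j -> /= j2|-> //]; apply: best_approx_lac_eq0.
Qed.

End Construction.

Section Injectivity.
Variables (R : realType) (p : nat).

Lemma expo_agree b b' i : (forall n, (n < i)%N -> b n = b' n) ->
  forall k, (k <= i)%N -> expo p b k = expo p b' k.
Proof. by move=> H; elim=> [//|k IH] ki; rewrite !expoS IH ?H // ltnW. Qed.

Lemma psum_agree b b' (c : 'I_p.+3) i :
  (forall k, (k <= i)%N -> expo p b k = expo p b' k) ->
  forall k, (k <= i)%N -> psum R b c k = psum R b' c k.
Proof. by move=> H; elim=> [//|k IH] ki /=; rewrite IH ?(ltnW ki) // /scale H. Qed.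

Lemma lac_neq b b' i : (forall k, (k <= i)%N -> expo p b k = expo p b' k) ->
  b i = false -> b' i = true -> lac R b (column_ord p i) != lac R b' (column_ord p i).
Proof.
move=> H bi bi'; set c := column_ord p i.
have e_eq : expo p b' i.+1 = (expo p b i.+1).+1.
  by rewrite !expoS bi bi' H // addn0 addn1.
have lb := psum_le_lac R b c i.+1; have ub := lac_le_psum R b' c i.+1.
rewrite /= eqxx -(psum_agree c H (leqnn i)) in lb ub.
have P0 := scale_gt0 R p b i.+1; set P := scale R p b i.+1 in P0 lb.
have P' : scale R p b' i.+1 = 2 * P by rewrite /scale e_eq exprS.
have Q4 := inv_scale4 R p b' i.+1; rewrite P' in ub Q4.
rewrite [true%:R]/= mul1r in lb; rewrite [true%:R]/= mul1r invfM mulrC in ub.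
rewrite invfM mulrC in Q4; have x0 : 0 < P^-1 by rewrite invr_gt0.
by apply/eqP => E; rewrite -E in ub; clear -lb ub Q4 x0; lra.
Qed.

Lemma lac_inj : injective (@lac R p).
Proof.
move=> b b' E; apply/funext => n; apply/eqP/negPn/negP => bn.
have [i bi imin] := ex_minnP (ex_intro (fun n => b n != b' n) n bn).
have agree : forall k, (k <= i)%N -> expo p b k = expo p b' k.
  apply: expo_agree => k ki; apply/eqP; apply: contraTT ki => bk.
  by rewrite -leqNgt imin.
case ebi : (b i); case ebi' : (b' i); rewrite ebi ebi' // in bi.
- have agree' k : (k <= i)%N -> expo p b' k = expo p b k by move/agree.
  by have := lac_neq agree' ebi' ebi; rewrite E eqxx.
- by have := lac_neq agree ebi ebi'; rewrite E eqxx.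
Qed.

End Injectivity.

Lemma bool_seq_not_inj_nat (f : (nat -> bool) -> nat) : ~ injective f.
Proof.
move=> f_inj; pose d n := ~~ `[< exists x, f x = n /\ x n >].
suff : `[< exists x, f x = f d /\ x (f d) >] = d (f d) by rewrite /d; case: `[< _ >].
by apply/asboolP/idP => [[x [/f_inj -> //]] | dfd]; exists d.
Qed.

Lemma range_inj_uncountable (T : Type) (F : (nat -> bool) -> T) :
  injective F -> ~ countable (range F).
Proof.
move=> F_inj /countable_injP[f f_inj]; apply: (@bool_seq_not_inj_nat (f \o F)) => x y /= fxy.
by apply: F_inj; apply: f_inj => //; rewrite inE; [exists x | exists y].
Qed.

Local Open Scope classical_set_scope.

Theorem theorem1p3 (R : realType) (r : nat) (hr : (3 <= r)%N) :
  exists S : set ('I_r -> R),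
    ~ countable S /\
    forall alpha, S alpha ->
      Q_lin_indep1 alpha /\
      exists b : 'I_3 -> 'I_r.+1 -> int,
        Z_lin_indep b /\
        finite_set [set m | best_approx alpha m /\ ~ in_lattice b m].
Proof.
case: r hr => [|[|[|p]]] // _.
exists (range (@lac R p)); split; first exact/range_inj_uncountable/lac_inj.
move=> _ [b _ <-]; split; first exact/Q_lin_indep1_of_int/linform_lac_eq0.
exists (@std_basis 3 p.+4); split; first exact: std_basis_indep.
rewrite (_ : [set m | _] = set0) //; apply/seteqP; split=> m // [].
by move/best_approx_lac_in_lattice.
Qed.
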